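(* Let $\mathbb{A}=(a_{ij})\in\mathbb{R}^{n\times n}$ satisfy $a_{ij}\ge0$ for $i\ne j$ and $a_{jj}=-\sum_{i\ne j}a_{ij}$ for each $j$ (so every column sums to zero). Let $0<\alpha\le1$ and $t\ge0$. Then the matrix $$E_\alpha(\mathbb{A}t^\alpha)=\sum_{k=0}^\infty\frac{t^{\alpha k}\mathbb{A}^k}{\Gamma(\alpha k+1)}$$ is a (column) stochastic matrix: all its entries are nonnegative and each of its columns sums to $1$. *)

From Stdlib Require Import Reals ClassicalEpsilon.
Open Scope R_scope.

(* Total "Riemann integral": RiemannInt if f is Riemann integrable on [a,b], else 0. *)
Definition RInt (f : R -> R) (a b : R) : R :=
  match excluded_middle_informative (exists pr : Riemann_integrable f a b, True) with
  | left H => let pr := proj1_sig (constructive_indefinite_description _ H) in RiemannInt pr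
  | right _ => 0
  end.

(* Limit of a real sequence (0 if it does not converge). *)
Definition seq_lim (u : nat -> R) : R :=
  match excluded_middle_informative (exists l, Un_cv u l) with
  | left H => proj1_sig (constructive_indefinite_description _ H)
  | right _ => 0
  end.

(* Sum of a real series (0 if it does not converge). *)
Definition series_sum (u : nat -> R) : R :=
  match excluded_middle_informative (exists l, infinite_sum u l) with
  | left H => proj1_sig (constructive_indefinite_description _ H)
  | right _ => 0
  end.

(* Real power for t >= 0, with 0^y = 0 for y <> 0 and 0^0 = 1. *)
Definition rpow (t y : R) : R :=
  if Req_EM_T t 0 then (if Req_EM_T y 0 then 1 else 0) else Rpower t y.

(* Euler Gamma function: Gamma(s) = int_0^oo x^(s-1) e^(-x) dx  (s > 0),
   as the limit of the integrals over [1/(m+1), m+1]. *)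
Definition Gamma (s : R) : R :=
  seq_lim (fun m => RInt (fun x => Rpower x (s - 1) * exp (- x))
                         (/ (INR m + 1)) (INR m + 1)).

(* n x n real matrices as functions of (row, column) indices in {0..n-1}. *)
Definition mat := nat -> nat -> R.

Fixpoint fsum (n : nat) (f : nat -> R) : R :=
  match n with O => 0 | S m => fsum m f + f m end.

Definition matmul (n : nat) (A B : mat) : mat :=
  fun i j => fsum n (fun l => A i l * B l j).

Definition matid : mat := fun i j => if Nat.eqb i j then 1 else 0.

Fixpoint matpow (n : nat) (A : mat) (k : nat) : mat :=
  match k with O => matid | S k' => matmul n A (matpow n A k') end.

Definition ML_term (n : nat) (A : mat) (alpha t : R) (i j k : nat) : R :=
  rpow t (alpha * INR k) * matpow n A k i j / Gamma (alpha * INR k + 1).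

Definition ML_matrix (n : nat) (A : mat) (alpha t : R) : mat :=
  fun i j => series_sum (ML_term n A alpha t i j).

(* The matrix [E_alpha(A t^alpha)] is the limit, as [N -> oo], of the implicit
   Grünwald-Letnikov scheme for the Caputo equation [D^alpha y = A y] run for [N]
   steps of length [t / N].  Expanding the scheme in powers of [h = (t / N)^alpha]
   gives [y_N = sum_k h^k A^k binom(alpha k + N, N)], and Gauss's product formula
   [N^(-s) binom(s + N, N) -> 1 / Gamma(s + 1)] yields termwise convergence to the
   Mittag-Leffler series; Tannery's theorem passes to the limit in the sum.
   Positivity: each step reads [(I - h A) y_M = w_0 y_0 - sum_(j >= 1) w_j y_(M-j)]
   with Grünwald-Letnikov weights [w_j = (-1)^j binom(alpha, j) <= 0] for [j >= 1]
   (as [0 < alpha <= 1]), and [I - h A] is inverse-positive for a Metzler matrix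
   [A] once [h] is small, so [y_M >= 0] by induction on [M].  Column sums are
   [1] because the columns of [A^k] sum to [0] for [k >= 1]. *)

From Pilot Require Import Defs.
From Coquelicot Require Import Coquelicot.
From Stdlib Require Import Reals Lra Lia Factorial ClassicalEpsilon.
Open Scope R_scope.

Lemma fsum_ext n f g : (forall i, (i < n)%nat -> f i = g i) -> fsum n f = fsum n g.
Proof. induction n; intros H; simpl; auto. rewrite IHn, H; auto. Qed.

Lemma fsum_add n f g : fsum n (fun i => f i + g i) = fsum n f + fsum n g.
Proof. induction n; simpl; [ring | rewrite IHn; ring]. Qed.

Lemma fsum_scal n c f : fsum n (fun i => c * f i) = c * fsum n f.
Proof. induction n; simpl; [ring | rewrite IHn; ring]. Qed.

Lemma fsum_mulr n f c : fsum n (fun i => f i * c) = fsum n f * c.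
Proof. induction n; simpl; [ring | rewrite IHn; ring]. Qed.

Lemma fsum_const n c : fsum n (fun _ => c) = INR n * c.
Proof. induction n; simpl fsum; [rewrite INR_0 | rewrite IHn, S_INR]; ring. Qed.

Lemma fsum_eq0 n f : (forall i, (i < n)%nat -> f i = 0) -> fsum n f = 0.
Proof. intros H. rewrite (fsum_ext n f (fun _ => 0)), fsum_const by auto. ring. Qed.

Lemma fsum_shift n f : fsum (S n) f = f O + fsum n (fun i => f (S i)).
Proof. induction n; simpl in *; [ring | rewrite IHn; ring]. Qed.

Lemma fsum_le n f g : (forall i, (i < n)%nat -> f i <= g i) -> fsum n f <= fsum n g.
Proof. induction n; intros H; simpl; [lra | apply Rplus_le_compat; auto]. Qed.

Lemma fsum_ge0 n f : (forall i, (i < n)%nat -> 0 <= f i) -> 0 <= fsum n f.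
Proof.
  intros H. rewrite <- (Rmult_0_r (INR n)), <- fsum_const. apply fsum_le; auto.
Qed.

Lemma fsum_term_le n f k :
  (forall i, (i < n)%nat -> 0 <= f i) -> (k < n)%nat -> f k <= fsum n f.
Proof.
  induction n; intros H Hk; [lia | simpl].
  destruct (Nat.eq_dec k n) as [->|Hne].
  - assert (0 <= fsum n f) by (apply fsum_ge0; auto). lra.
  - assert (f k <= fsum n f) by (apply IHn; auto; lia). assert (0 <= f n) by auto. lra.
Qed.

Lemma fsum_abs n f : Rabs (fsum n f) <= fsum n (fun i => Rabs (f i)).
Proof.
  induction n; simpl; [rewrite Rabs_R0; lra|].
  eapply Rle_trans; [apply Rabs_triang | lra].
Qed.

Lemma fsum_swap n m (f : nat -> nat -> R) :
  fsum n (fun i => fsum m (fun j => f i j)) = fsum m (fun j => fsum n (fun i => f i j)).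
Proof.
  induction n; simpl; [rewrite fsum_eq0; auto|].
  rewrite IHn, <- fsum_add. reflexivity.
Qed.

Lemma fsum_delta n j c : (j < n)%nat -> fsum n (fun i => if Nat.eqb i j then c else 0) = c.
Proof.
  induction n; intros Hj; [lia | simpl].
  destruct (Nat.eq_dec j n) as [->|Hne].
  - rewrite Nat.eqb_refl, fsum_eq0; [ring|].
    intros i Hi. destruct (Nat.eqb_spec i n); [lia | auto].
  - rewrite IHn by lia. destruct (Nat.eqb_spec n j); [lia | ring].
Qed.

Lemma exists_argmin n (f : nat -> R) :
  (0 < n)%nat -> exists i0, (i0 < n)%nat /\ forall i, (i < n)%nat -> f i0 <= f i.
Proof.
  induction n as [|[|n] IHn]; intros Hn; [lia | |].
  { exists O. split; [lia|]. intros i Hi. replace i with O by lia. lra. }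
  destruct (IHn ltac:(lia)) as [i1 [Hi1 H1]].
  destruct (Rle_dec (f i1) (f (S n))).
  - exists i1. split; [lia|]. intros i Hi.
    destruct (Nat.eq_dec i (S n)) as [->|]; auto. apply H1; lia.
  - exists (S n). split; [lia|]. intros i Hi.
    destruct (Nat.eq_dec i (S n)) as [->|]; [lra|]. specialize (H1 i ltac:(lia)). lra.
Qed.

Lemma Rpower_pos x s : 0 < Rpower x s.
Proof. apply exp_pos. Qed.

Lemma Rpower_1_l s : Rpower 1 s = 1.
Proof. unfold Rpower. rewrite ln_1, Rmult_0_r. apply exp_0. Qed.

Lemma Rpower_pow_INR x a k : 0 < x -> Rpower x a ^ k = Rpower x (a * INR k).
Proof. intros Hx. rewrite <- Rpower_pow by apply Rpower_pos. apply Rpower_mult. Qed.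

Lemma Rpower_div x y a : 0 < x -> 0 < y -> Rpower (x / y) a = Rpower x a / Rpower y a.
Proof.
  intros Hx Hy. unfold Rdiv.
  rewrite <- Rpower_mult_distr by (auto; apply Rinv_0_lt_compat; auto).
  f_equal. rewrite <- Rpower_Ropp. unfold Rpower. rewrite ln_Rinv by auto. f_equal. ring.
Qed.

Lemma Rpower_INR_large (X al : R) : 0 < al ->
  exists N0, (0 < N0)%nat /\ forall N, (N0 <= N)%nat -> X <= Rpower (INR N) al.
Proof.
  intros Hal. destruct (INR_archimed 1 (Rpower (Rabs X + 1) (/ al)) ltac:(lra)) as [m Hm].
  exists (S m). split; [lia|]. intros N HN.
  assert (HNm : INR (S m) <= INR N) by (apply le_INR; auto). rewrite S_INR in HNm.
  assert (Hp := Rpower_pos (Rabs X + 1) (/ al)).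
  apply Rle_trans with (Rabs X + 1); [pose proof (Rle_abs X); lra|].
  replace (Rabs X + 1) with (Rpower (Rpower (Rabs X + 1) (/ al)) al).
  - apply Rle_Rpower_l; lra.
  - rewrite Rpower_mult, Rinv_l, Rpower_1; auto; [pose proof (Rabs_pos X); lra | lra].
Qed.

Lemma exp_le_compat x y : x <= y -> exp x <= exp y.
Proof. intros [H | ->]; [left; apply exp_increasing, H | lra]. Qed.

Lemma exp_mult_INR (n : nat) (y : R) : exp (INR n * y) = exp y ^ n.
Proof.
  induction n; [simpl; rewrite Rmult_0_l; apply exp_0|].
  rewrite S_INR, Rmult_plus_distr_r, Rmult_1_l, exp_plus, IHn. simpl. ring.
Qed.

Lemma ln_le_sub1 u : 0 < u -> ln u <= u - 1.
Proof.
  intros Hu. rewrite <- (ln_exp (u - 1)). apply ln_le; auto.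
  pose proof (exp_ineq1_le (u - 1)). lra.
Qed.

Lemma exp_half_le_2 : exp (/ 2) <= 2.
Proof.
  assert (exp (/ 2) * exp (/ 2) = exp 1) by (rewrite <- exp_plus; f_equal; field).
  pose proof exp_le_3. pose proof (exp_pos (/ 2)). nra.
Qed.

Lemma pow_le_exp_half (x : R) (m : nat) :
  0 <= x -> (0 < m)%nat -> x ^ m <= (2 * INR m) ^ m * exp (x / 2).
Proof.
  intros Hx Hm. assert (Hm1 : 1 <= INR m) by (apply (le_INR 1); lia).
  assert (Hy : x / (2 * INR m) <= exp (x / (2 * INR m)))
    by (pose proof (exp_ineq1_le (x / (2 * INR m))); lra).
  replace (x / 2) with (INR m * (x / (2 * INR m))) by (field; lra).
  rewrite exp_mult_INR, <- Rpow_mult_distr.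
  replace (x ^ m) with ((2 * INR m * (x / (2 * INR m))) ^ m) by (f_equal; field; lra).
  apply pow_incr. split; [apply Rmult_le_pos; [lra | apply Rdiv_le_0_compat; lra]|].
  apply Rmult_le_compat_l; lra.
Qed.

Lemma pow_mul_poly_le_geom q p k : 0 <= q <= / 4 -> (0 < p)%nat ->
  q ^ k * (1 + INR k) ^ p <= (2 * INR p) ^ p * 2 * (/ 2) ^ k.
Proof.
  intros Hq Hp.
  assert (H1 := pow_le_exp_half (1 + INR k) p ltac:(pose proof (pos_INR k); lra) Hp).
  assert (He : exp ((1 + INR k) / 2) = exp (/ 2) * exp (/ 2) ^ k)
    by (rewrite <- exp_mult_INR, <- exp_plus; f_equal; field).
  assert (He2 := exp_half_le_2). assert (Hep := exp_pos (/ 2)).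
  assert (Hqk : 0 <= q ^ k) by (apply pow_le; lra).
  assert (Hpp : 0 <= (2 * INR p) ^ p) by (apply pow_le; pose proof (pos_INR p); lra).
  apply Rle_trans with (q ^ k * ((2 * INR p) ^ p * exp ((1 + INR k) / 2))).
  { apply Rmult_le_compat_l; auto. }
  replace (q ^ k * ((2 * INR p) ^ p * exp ((1 + INR k) / 2)))
    with ((2 * INR p) ^ p * exp (/ 2) * (q * exp (/ 2)) ^ k) by (rewrite He, (Rpow_mult_distr q); ring).
  apply Rmult_le_compat; [nra | apply pow_le; nra | apply Rmult_le_compat_l; lra|].
  apply pow_incr. nra.
Qed.

Lemma pow_sub_pow_le (a b : R) (n : nat) :
  0 <= b -> b <= a -> a <= 1 -> a ^ n - b ^ n <= INR n * (a - b).
Proof.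
  intros Hb Hba Ha. induction n; [simpl; lra|]. rewrite S_INR. simpl.
  assert (b ^ n <= a ^ n) by (apply pow_incr; lra).
  assert (0 <= b ^ n <= 1) by (split; [apply pow_le | rewrite <- (pow1 n); apply pow_incr]; lra).
  nra.
Qed.

Lemma exp_neg_approx (N : nat) (x : R) : (0 < N)%nat -> 0 <= x <= INR N ->
  0 <= 1 - x / INR N /\ (1 - x / INR N) ^ N <= exp (- x) /\
  exp (- x) - x ^ 2 / INR N <= (1 - x / INR N) ^ N.
Proof.
  intros HN Hx. assert (HNr : 0 < INR N) by (apply lt_0_INR; auto).
  set (y := x / INR N).
  assert (Hy : 0 <= y <= 1).
  { unfold y; split; [apply Rdiv_le_0_compat; lra|].
    apply Rmult_le_reg_r with (INR N); auto. unfold Rdiv. rewrite Rmult_assoc, Rinv_l; lra. }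
  assert (Hex : exp (- x) = exp (- y) ^ N) by (rewrite <- exp_mult_INR; f_equal; unfold y; field; lra).
  assert (H1 : 1 - y <= exp (- y)) by (pose proof (exp_ineq1_le (- y)); lra).
  assert (H2 : exp (- y) <= 1 - y + y ^ 2).
  { assert (1 + y <= exp y) by apply exp_ineq1_le.
    assert (0 < exp y) by apply exp_pos.
    rewrite exp_Ropp. apply Rmult_le_reg_l with (exp y); auto.
    rewrite Rinv_r by lra. simpl. nra. }
  assert (H3 : exp (- y) <= 1) by (rewrite <- exp_0; apply exp_le_compat; lra).
  rewrite Hex. repeat split; [lra | apply pow_incr; lra |].
  pose proof (pow_sub_pow_le (exp (- y)) (1 - y) N ltac:(lra) H1 H3).
  assert (INR N * (exp (- y) - (1 - y)) <= INR N * y ^ 2) by (apply Rmult_le_compat_l; lra).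
  replace (x ^ 2 / INR N) with (INR N * y ^ 2) by (unfold y; field; lra). lra.
Qed.

(* [x ^ s] for [x > 0], extended by [0] to [x <= 0]; for [s > 0] it is continuous
   on all of [R], which is what the integrals from [0] below need. *)
Definition ppow (x s : R) : R := if Rlt_dec 0 x then Rpower x s else 0.

Lemma ppow_pos x s : 0 < x -> ppow x s = Rpower x s.
Proof. intros H; unfold ppow; destruct (Rlt_dec 0 x); lra. Qed.

Lemma ppow_npos x s : x <= 0 -> ppow x s = 0.
Proof. intros H; unfold ppow; destruct (Rlt_dec 0 x); lra. Qed.

Lemma ppow_ge0 x s : 0 <= ppow x s.
Proof. unfold ppow; destruct (Rlt_dec 0 x); [left; apply Rpower_pos | lra]. Qed.

Lemma ppow_succ x s : ppow x (s + 1) = x * ppow x s.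
Proof.
  unfold ppow; destruct (Rlt_dec 0 x); [|ring].
  rewrite Rpower_plus, Rpower_1; auto; ring.
Qed.

Lemma ppow_le1 x s : 0 < s -> x <= 1 -> ppow x s <= 1.
Proof.
  intros Hs Hx. destruct (Rlt_dec 0 x).
  - rewrite ppow_pos, <- (Rpower_1_l s) by auto. apply Rle_Rpower_l; lra.
  - rewrite ppow_npos; lra.
Qed.

Lemma ppow_scale a y s : 0 < a -> ppow (a * y) s = Rpower a s * ppow y s.
Proof.
  intros Ha. destruct (Rlt_dec 0 y).
  - rewrite !ppow_pos, Rpower_mult_distr; auto. nra.
  - rewrite !ppow_npos; nra.
Qed.

Lemma ppow_small s e :
  0 < s -> 0 < e -> exists d, 0 < d /\ forall y, Rabs y < d -> ppow y s < e.
Proof.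
  intros Hs He. exists (Rpower e (/ s)). split; [apply Rpower_pos|].
  intros y Hy. destruct (Rlt_dec 0 y) as [Hp|Hn]; [|rewrite ppow_npos; lra].
  rewrite ppow_pos, Rabs_right in * by lra.
  replace e with (Rpower (Rpower e (/ s)) s).
  - apply Rlt_Rpower_l; auto.
  - rewrite Rpower_mult, Rinv_l, Rpower_1; lra.
Qed.

Lemma ppow_locally_0 x s : x < 0 -> locally x (fun y => 0 = ppow y s).
Proof.
  intros Hx. apply (locally_interval _ x m_infty 0); simpl; auto.
  intros y _ Hy. rewrite ppow_npos; lra.
Qed.

Lemma ppow_locally_Rpower x s : 0 < x -> locally x (fun y => Rpower y s = ppow y s).
Proof.
  intros Hx. apply (locally_interval _ x 0 p_infty); simpl; auto.
  intros y Hy _. rewrite ppow_pos; lra.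
Qed.

Lemma continuous_ppow s x : 0 < s -> continuous (fun y => ppow y s) x.
Proof.
  intros Hs. destruct (Rtotal_order x 0) as [Hx|[->|Hx]].
  - eapply continuous_ext_loc; [apply ppow_locally_0, Hx | apply continuous_const].
  - apply continuity_pt_filterlim. intros e He.
    destruct (ppow_small s e Hs He) as [d [Hd H]].
    exists d. split; auto. intros y [_ Hy]. simpl in *. unfold R_dist in *.
    rewrite (ppow_npos 0), Rminus_0_r, Rabs_right in * by (try apply Rle_ge, ppow_ge0; lra).
    auto.
  - eapply continuous_ext_loc; [apply ppow_locally_Rpower, Hx|].
    apply continuity_pt_filterlim, derivable_continuous_pt.
    exists (s * Rpower x (s - 1)). apply derivable_pt_lim_power; auto.
Qed.

Lemma is_derive_ppow s x : 0 < s -> is_derive (fun y => ppow y (s + 1)) x ((s + 1) * ppow x s).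
Proof.
  intros Hs. destruct (Rtotal_order x 0) as [Hx|[->|Hx]].
  - eapply is_derive_ext_loc; [apply ppow_locally_0, Hx|].
    rewrite ppow_npos, Rmult_0_r by lra. apply (is_derive_const (K := R_AbsRing) (V := R_NormedModule)).
  - rewrite (ppow_npos 0), Rmult_0_r by lra.
    apply is_derive_Reals. intros e He.
    destruct (ppow_small s e Hs He) as [d [Hd H]].
    exists (mkposreal d Hd). intros h Hh Hhd. simpl in Hhd.
    rewrite Rplus_0_l, (ppow_npos 0), ppow_succ by lra.
    replace ((h * ppow h s - 0) / h - 0) with (ppow h s) by (field; auto).
    rewrite Rabs_right by apply Rle_ge, ppow_ge0. auto.
  - eapply is_derive_ext_loc; [apply ppow_locally_Rpower, Hx|].
    rewrite ppow_pos by auto. replace s with (s + 1 - 1) at 2 by ring.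
    apply is_derive_Reals, derivable_pt_lim_power; auto.
Qed.

(** * The Beta integral *)

Fixpoint poch (x : R) (N : nat) : R :=
  match N with O => 1 | S M => poch x M * (x + INR M) end.

Lemma poch_pos x N : 0 < x -> 0 < poch x N.
Proof.
  intros Hx. induction N; simpl; [lra|].
  apply Rmult_lt_0_compat; auto. pose proof (pos_INR N). lra.
Qed.

Lemma poch_succ_l x N : poch x (S N) = x * poch (x + 1) N.
Proof.
  induction N; [simpl; ring|].
  change (poch x (S N) * (x + INR (S N)) = x * (poch (x + 1) N * (x + 1 + INR N))).
  rewrite IHN, S_INR. ring.
Qed.

Lemma is_RInt_beta N : forall s, 0 < s ->
  is_RInt (fun u => ppow u s * (1 - u) ^ N) 0 1 (INR (fact N) / poch (s + 1) (S N)).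
Proof.
  induction N as [|N IHN]; intros s Hs.
  - apply (is_RInt_ext (fun u => / (s + 1) * ((s + 1) * ppow u s))).
    { intros x _. simpl. field. lra. }
    replace (INR (fact 0) / poch (s + 1) 1)
      with (/ (s + 1) * ppow 1 (s + 1) - / (s + 1) * ppow 0 (s + 1))
      by (rewrite ppow_pos, Rpower_1_l, ppow_npos by lra; simpl; field; lra).
    apply (is_RInt_derive (fun u => / (s + 1) * ppow u (s + 1))).
    + intros x _. apply (is_derive_scal (fun u => ppow u (s + 1))), is_derive_ppow, Hs.
    + intros x _. apply (continuous_scal_r (/ (s + 1)) (fun u => (s + 1) * ppow u s)).
      apply (continuous_scal_r (s + 1) (fun u => ppow u s)), continuous_ppow, Hs.
  - apply (is_RInt_ext (fun u => ppow u s * (1 - u) ^ N - ppow u (s + 1) * (1 - u) ^ N)).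
    { intros x _. rewrite ppow_succ. simpl. ring. }
    replace (INR (fact (S N)) / poch (s + 1) (S (S N)))
      with (INR (fact N) / poch (s + 1) (S N) - INR (fact N) / poch (s + 1 + 1) (S N)).
    { apply (is_RInt_minus (V := R_NormedModule)); apply IHN; lra. }
    assert (HP := poch_pos (s + 1) (S N) ltac:(lra)).
    assert (HQ := poch_pos (s + 1 + 1) (S N) ltac:(lra)).
    assert (E1 : poch (s + 1) (S (S N)) = poch (s + 1) (S N) * (s + 1 + INR (S N))) by reflexivity.
    assert (E2 := poch_succ_l (s + 1) (S N)).
    rewrite E1 in E2. rewrite E1, fact_simpl, mult_INR. rewrite !S_INR in *.
    pose proof (pos_INR N).
    replace (poch (s + 1 + 1) (S N)) with (poch (s + 1) (S N) * (s + 1 + (INR N + 1)) / (s + 1))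
      by (rewrite E2; field; lra).
    field. repeat split; lra.
Qed.

Definition gamma_integrand (s x : R) : R := ppow x s * exp (- x).

Definition gamma_trunc (s b : R) : R := RInt (gamma_integrand s) 0 b.

Lemma continuous_gamma_integrand s x : 0 < s -> continuous (gamma_integrand s) x.
Proof.
  intros Hs. apply (continuous_mult (fun y => ppow y s) (fun y => exp (- y))).
  - apply continuous_ppow, Hs.
  - apply continuity_pt_filterlim. reg.
Qed.

Lemma ex_RInt_gamma_integrand s a b : 0 < s -> ex_RInt (gamma_integrand s) a b.
Proof.
  intros Hs. apply (ex_RInt_continuous (V := R_CompleteNormedModule)).
  intros; apply continuous_gamma_integrand, Hs.
Qed.

Lemma gamma_integrand_ge0 s x : 0 <= gamma_integrand s x.
Proof. apply Rmult_le_pos; [apply ppow_ge0 | left; apply exp_pos]. Qed.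

Lemma gamma_trunc_le s b b' : 0 < s -> 0 <= b <= b' -> gamma_trunc s b <= gamma_trunc s b'.
Proof.
  intros Hs Hb. unfold gamma_trunc.
  rewrite <- (RInt_Chasles (V := R_CompleteNormedModule) (gamma_integrand s) 0 b b')
    by apply ex_RInt_gamma_integrand, Hs.
  assert (0 <= RInt (gamma_integrand s) b b').
  { apply RInt_ge_0; [lra | apply ex_RInt_gamma_integrand, Hs | intros; apply gamma_integrand_ge0]. }
  change (plus ?a ?b) with (a + b). lra.
Qed.

Lemma gamma_integrand_le_exp_half s : 0 < s ->
  exists K, 0 < K /\ forall x, 0 <= x -> gamma_integrand s x <= K * exp (- x / 2).
Proof.
  intros Hs. destruct (INR_archimed 1 s ltac:(lra)) as [m0 Hm0].
  set (m := S m0). assert (Hm : s <= INR m) by (unfold m; rewrite S_INR; lra).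
  assert (Hpm : 0 <= (2 * INR m) ^ m) by (apply pow_le; pose proof (pos_INR m); lra).
  exists (1 + (2 * INR m) ^ m). split; [lra|]. intros x Hx.
  assert (Hpow : ppow x s <= 1 + (2 * INR m) ^ m * exp (x / 2)).
  { assert (Hx2 : 1 <= exp (x / 2)) by (rewrite <- exp_0; apply exp_le_compat; lra).
    destruct (Rle_dec x 1) as [Hx1|Hx1].
    - assert (ppow x s <= 1) by (apply ppow_le1; lra). nra.
    - assert (ppow x s <= x ^ m) by (rewrite ppow_pos, <- Rpower_pow by lra; apply Rle_Rpower; lra).
      pose proof (pow_le_exp_half x m Hx ltac:(unfold m; lia)). lra. }
  assert (Hsq : exp (- x) = exp (- x / 2) * exp (- x / 2)) by (rewrite <- exp_plus; f_equal; field).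
  assert (Hinv : exp (x / 2) * exp (- x / 2) = 1) by (rewrite <- exp_plus, <- exp_0; f_equal; field).
  assert (Hh : exp (- x / 2) <= 1) by (rewrite <- exp_0; apply exp_le_compat; lra).
  assert (0 < exp (- x / 2)) by apply exp_pos.
  unfold gamma_integrand. rewrite Hsq.
  apply Rle_trans with ((1 + (2 * INR m) ^ m * exp (x / 2)) * (exp (- x / 2) * exp (- x / 2))).
  - apply Rmult_le_compat_r; nra.
  - replace ((1 + (2 * INR m) ^ m * exp (x / 2)) * (exp (- x / 2) * exp (- x / 2)))
      with (exp (- x / 2) * exp (- x / 2) + (2 * INR m) ^ m * (exp (x / 2) * exp (- x / 2)) * exp (- x / 2))
      by ring.
    rewrite Hinv. nra.
Qed.

Lemma gamma_trunc_bounded s : 0 < s -> exists C, forall b, 0 <= b -> gamma_trunc s b <= C.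
Proof.
  intros Hs. destruct (gamma_integrand_le_exp_half s Hs) as [K [HK Hb]].
  exists (2 * K). intros b Hb0.
  assert (HI : is_RInt (fun x => K * exp (- x / 2)) 0 b
                 (- 2 * K * exp (- b / 2) - - 2 * K * exp (- 0 / 2))).
  { apply (is_RInt_derive (fun x => - 2 * K * exp (- x / 2))).
    - intros x _. auto_derive; auto. set (e := exp _). field.
    - intros x _. apply continuity_pt_filterlim. reg. }
  unfold gamma_trunc. eapply Rle_trans.
  - apply (RInt_le _ (fun x => K * exp (- x / 2))); auto.
    + apply ex_RInt_gamma_integrand, Hs.
    + eexists; apply HI.
    + intros x Hx; apply Hb; lra.
  - rewrite (is_RInt_unique _ _ _ _ HI).
    replace (- 0 / 2) with 0 by field. rewrite exp_0.
    assert (0 < exp (- b / 2)) by apply exp_pos. nra.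
Qed.

Lemma gamma_trunc_small s a : 0 < s -> 0 <= a <= 1 -> 0 <= gamma_trunc s a <= a.
Proof.
  intros Hs Ha. unfold gamma_trunc. split.
  - apply RInt_ge_0; [lra | apply ex_RInt_gamma_integrand, Hs | intros; apply gamma_integrand_ge0].
  - eapply Rle_trans.
    + apply (RInt_le _ (fun _ => 1)); [lra | apply ex_RInt_gamma_integrand, Hs | apply ex_RInt_const|].
      intros x Hx. unfold gamma_integrand.
      assert (ppow x s <= 1) by (apply ppow_le1; lra).
      assert (exp (- x) <= 1) by (rewrite <- exp_0; apply exp_le_compat; lra).
      pose proof (ppow_ge0 x s). pose proof (exp_pos (- x)). nra.
    + rewrite RInt_const. change (scal ?a ?b) with (a * b). lra.
Qed.

Lemma gamma_trunc_cv s : 0 < s ->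
  exists L, Un_cv (fun m => gamma_trunc s (INR m)) L /\ forall m, gamma_trunc s (INR m) <= L.
Proof.
  intros Hs.
  assert (Hg : Un_growing (fun m => gamma_trunc s (INR m))).
  { intros m. apply gamma_trunc_le; auto. rewrite S_INR. pose proof (pos_INR m). lra. }
  destruct (gamma_trunc_bounded s Hs) as [C HC].
  destruct (growing_cv _ Hg) as [L HL].
  { exists C. intros x [m ->]. apply HC, pos_INR. }
  exists L. split; auto. apply growing_ineq; auto.
Qed.

Lemma RInt_Defs f a b : ex_RInt f a b -> Defs.RInt f a b = RInt f a b.
Proof.
  intros Hex. unfold Defs.RInt. destruct (excluded_middle_informative _) as [H|H].
  - destruct (constructive_indefinite_description _ H) as [pr Hpr]. simpl.
    symmetry. apply is_RInt_unique, ex_RInt_Reals_aux_1.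
  - exfalso. apply H. exists (ex_RInt_Reals_0 _ _ _ Hex). auto.
Qed.

Lemma seq_lim_eq u l : Un_cv u l -> seq_lim u = l.
Proof.
  intros H. unfold seq_lim. destruct (excluded_middle_informative _) as [H1|H1].
  - destruct (constructive_indefinite_description _ H1) as [l' Hl']. simpl.
    eapply UL_sequence; eauto.
  - exfalso. apply H1. eauto.
Qed.

Lemma Un_cv_inv_succ : Un_cv (fun m => / (INR m + 1)) 0.
Proof.
  intros e He. destruct (archimed_cor1 e He) as [N [HN HN0]].
  exists N. intros n Hn. unfold R_dist.
  rewrite Rminus_0_r, Rabs_right by (left; apply RinvN_pos).
  apply Rle_lt_trans with (/ INR N); auto.
  apply Rinv_le_contravar; [apply lt_0_INR; auto|].
  assert (INR N <= INR n) by (apply le_INR; lia). lra.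
Qed.

Lemma Un_cv_const c : Un_cv (fun _ : nat => c) c.
Proof. intros e He. exists O. intros. unfold R_dist. rewrite Rminus_diag, Rabs_R0. auto. Qed.

Lemma inv_succ_le1 m : 0 < / (INR m + 1) <= 1.
Proof.
  split; [apply RinvN_pos|]. rewrite <- Rinv_1.
  apply Rinv_le_contravar; [lra | pose proof (pos_INR m); lra].
Qed.

(* [gamma_integrand s] is [x ^ s * exp (- x)] on [(0, +oo)], and
   [gamma_trunc s] on [[0, 1 / (m + 1)]] tends to [0]. *)
Lemma Gamma_succ_lim s L :
  0 < s -> Un_cv (fun m => gamma_trunc s (INR m)) L -> Gamma (s + 1) = L.
Proof.
  intros Hs HL. unfold Gamma. apply seq_lim_eq.
  apply Un_cv_ext with (fun m => gamma_trunc s (INR (S m)) - gamma_trunc s (/ (INR m + 1))).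
  - intros m. pose proof (inv_succ_le1 m). pose proof (pos_INR m).
    assert (Hext : forall x, Rmin (/ (INR m + 1)) (INR m + 1) < x < Rmax (/ (INR m + 1)) (INR m + 1) ->
                     gamma_integrand s x = Rpower x (s + 1 - 1) * exp (- x)).
    { intros x Hx. rewrite Rmin_left, Rmax_right in Hx by lra.
      unfold gamma_integrand. rewrite ppow_pos by lra. do 2 f_equal. ring. }
    rewrite RInt_Defs
      by (eapply ex_RInt_ext; [apply Hext | apply ex_RInt_gamma_integrand, Hs]).
    rewrite <- (RInt_ext (gamma_integrand s)) by auto.
    unfold gamma_trunc. rewrite S_INR.
    rewrite <- (RInt_Chasles (V := R_CompleteNormedModule) (gamma_integrand s) 0 (/ (INR m + 1)))
      by apply ex_RInt_gamma_integrand, Hs.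
    change (plus ?a ?b) with (a + b). ring.
  - replace L with (L - 0) by ring. apply CV_minus.
    + apply (CV_shift' _ 1) in HL. eapply Un_cv_ext; [|exact HL].
      intros n. simpl. rewrite Nat.add_1_r. reflexivity.
    + intros e He. destruct (Un_cv_inv_succ e He) as [N HN]. exists N. intros n Hn.
      specialize (HN n Hn). unfold R_dist in *. rewrite Rminus_0_r in *.
      pose proof (inv_succ_le1 n).
      destruct (gamma_trunc_small s (/ (INR n + 1)) Hs ltac:(lra)).
      rewrite Rabs_right in * by lra. lra.
Qed.

Lemma Gamma_1 : Gamma 1 = 1.
Proof.
  unfold Gamma. apply seq_lim_eq.
  apply Un_cv_ext with (fun m => exp (- / (INR m + 1)) - exp (- (INR m + 1))).
  - intros m. pose proof (inv_succ_le1 m). pose proof (pos_INR m).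
    assert (HI : is_RInt (fun x => exp (- x)) (/ (INR m + 1)) (INR m + 1)
                   (- exp (- (INR m + 1)) - - exp (- / (INR m + 1)))).
    { apply (is_RInt_derive (fun x => - exp (- x))).
      - intros x _. auto_derive; auto. cbv [mult scal plus opp]; simpl. ring.
      - intros x _. apply continuity_pt_filterlim. reg. }
    assert (Hext : forall x, Rmin (/ (INR m + 1)) (INR m + 1) < x < Rmax (/ (INR m + 1)) (INR m + 1) ->
                     exp (- x) = Rpower x (1 - 1) * exp (- x)).
    { intros x Hx. rewrite Rmin_left, Rmax_right in Hx by lra.
      rewrite Rminus_diag, Rpower_O by lra. ring. }
    rewrite RInt_Defs by (eapply ex_RInt_ext; [apply Hext | eexists; apply HI]).
    rewrite <- (RInt_ext _ _ _ _ Hext), (is_RInt_unique _ _ _ _ HI). ring.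
  - replace 1 with (1 - 0) at 1 by ring. apply CV_minus.
    + pose proof (continuity_seq (fun x => exp (- x)) _ 0 ltac:(reg) Un_cv_inv_succ) as H.
      simpl in H. rewrite Ropp_0, exp_0 in H. exact H.
    + intros e He. destruct (Un_cv_inv_succ e He) as [N HN]. exists N. intros n Hn.
      specialize (HN n Hn). unfold R_dist in *. rewrite Rminus_0_r in *.
      pose proof (pos_INR n). pose proof (inv_succ_le1 n).
      assert (exp (- (INR n + 1)) <= / (INR n + 1)).
      { rewrite exp_Ropp. apply Rinv_le_contravar; [lra|].
        pose proof (exp_ineq1_le (INR n + 1)). lra. }
      pose proof (exp_pos (- (INR n + 1))).
      rewrite Rabs_right in * by lra. lra.
Qed.

(** * Gauss's integral *)

Definition gauss_integrand (s : R) (N : nat) (x : R) : R := ppow x s * (1 - x / INR N) ^ N.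

Definition gauss_integral (s : R) (N : nat) : R := RInt (gauss_integrand s N) 0 (INR N).

Lemma ex_RInt_gauss_integrand s N a b : 0 < s -> ex_RInt (gauss_integrand s N) a b.
Proof.
  intros Hs. apply (ex_RInt_continuous (V := R_CompleteNormedModule)). intros x _.
  apply (continuous_mult (fun y => ppow y s) (fun y => (1 - y / INR N) ^ N)).
  - apply continuous_ppow, Hs.
  - apply continuity_pt_filterlim. reg.
Qed.

(* The substitution [x = N u] turns it into a Beta integral. *)
Lemma gauss_integral_eq s N : (0 < N)%nat -> 0 < s ->
  gauss_integral s N = INR N * Rpower (INR N) s * (INR (fact N) / poch (s + 1) (S N)).
Proof.
  intros HN Hs. assert (Hn : 0 < INR N) by (apply lt_0_INR; auto).
  set (n := INR N) in *. set (c := n * Rpower n s).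
  assert (Hc := is_RInt_scal _ _ _ c _ (is_RInt_beta N s Hs)).
  pose proof (is_RInt_comp_lin (fun u => scal c (ppow u s * (1 - u) ^ N)) (/ n) 0 0 n
                (scal c (INR (fact N) / poch (s + 1) (S N)))) as Hsub.
  replace (/ n * 0 + 0) with 0 in Hsub by ring.
  replace (/ n * n + 0) with 1 in Hsub by (field; lra).
  apply is_RInt_unique. eapply is_RInt_ext; [|apply (Hsub Hc)].
  intros x _. repeat change (scal ?a ?b) with (a * b).
  unfold gauss_integrand, c. fold n.
  rewrite Rplus_0_r, ppow_scale by (apply Rinv_0_lt_compat; auto).
  assert (Hinv : Rpower (/ n) s * Rpower n s = 1).
  { rewrite Rpower_mult_distr, Rinv_l by (try apply Rinv_0_lt_compat; lra). apply Rpower_1_l. }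
  replace (1 - / n * x) with (1 - x / n) by (field; lra).
  replace (/ n * (n * Rpower n s * (Rpower (/ n) s * ppow x s * (1 - x / n) ^ N)))
    with ((Rpower (/ n) s * Rpower n s) * (ppow x s * (1 - x / n) ^ N)) by (field; lra).
  rewrite Hinv, Rmult_1_l. reflexivity.
Qed.

Lemma gauss_integral_pos s N : (0 < N)%nat -> 0 < s -> 0 < gauss_integral s N.
Proof.
  intros HN Hs. rewrite gauss_integral_eq by auto.
  assert (0 < INR N) by (apply lt_0_INR; auto).
  apply Rmult_lt_0_compat; [apply Rmult_lt_0_compat; auto; apply Rpower_pos|].
  apply Rdiv_lt_0_compat; [apply INR_fact_lt_0 | apply poch_pos; lra].
Qed.

Lemma gauss_integral_le_trunc s N : (0 < N)%nat -> 0 < s -> gauss_integral s N <= gamma_trunc s (INR N).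
Proof.
  intros HN Hs. apply RInt_le; [apply pos_INR | apply ex_RInt_gauss_integrand, Hs
                                | apply ex_RInt_gamma_integrand, Hs|].
  intros x Hx. destruct (exp_neg_approx N x HN ltac:(lra)) as [_ [H _]].
  apply Rmult_le_compat_l; [apply ppow_ge0 | auto].
Qed.

Lemma gamma_integrand_le_gauss_integrand s M N x : (0 < N)%nat -> 0 <= x <= INR M -> INR M <= INR N ->
  0 < s -> gamma_integrand s x - Rpower (INR M) s * INR M ^ 2 / INR N <= gauss_integrand s N x.
Proof.
  intros HN Hx HMN Hs. assert (HNr : 0 < INR N) by (apply lt_0_INR; auto).
  unfold gamma_integrand, gauss_integrand.
  destruct (exp_neg_approx N x HN ltac:(lra)) as [_ [_ Happrox]].
  assert (Hp : ppow x s <= Rpower (INR M) s).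
  { destruct (Rle_lt_dec x 0); [rewrite ppow_npos by lra; left; apply Rpower_pos|].
    rewrite ppow_pos by lra. apply Rle_Rpower_l; lra. }
  assert (Hp0 := ppow_ge0 x s).
  assert (Hx2 : x ^ 2 / INR N <= INR M ^ 2 / INR N)
    by (apply Rmult_le_compat_r; [left; apply Rinv_0_lt_compat; auto | apply pow_incr; lra]).
  assert (Hq : 0 <= x ^ 2 / INR N) by (apply Rdiv_le_0_compat; [apply pow2_ge_0 | auto]).
  assert (ppow x s * (x ^ 2 / INR N) <= Rpower (INR M) s * (INR M ^ 2 / INR N))
    by (apply Rmult_le_compat; lra).
  assert (Hmain : ppow x s * (exp (- x) - x ^ 2 / INR N) <= ppow x s * (1 - x / INR N) ^ N)
    by (apply Rmult_le_compat_l; lra).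
  unfold Rdiv in *. rewrite Rmult_minus_distr_l in Hmain. rewrite Rmult_assoc. lra.
Qed.

Lemma gauss_integral_ge_trunc s M N : (0 < N)%nat -> (M <= N)%nat -> 0 < s ->
  gamma_trunc s (INR M) - INR M * (Rpower (INR M) s * INR M ^ 2 / INR N) <= gauss_integral s N.
Proof.
  intros HN HMN Hs.
  assert (HMNr : INR M <= INR N) by (apply le_INR; auto).
  set (c := Rpower (INR M) s * INR M ^ 2 / INR N).
  unfold gauss_integral.
  rewrite <- (RInt_Chasles (V := R_CompleteNormedModule) (gauss_integrand s N) 0 (INR M))
    by apply ex_RInt_gauss_integrand, Hs.
  change (plus ?a ?b) with (a + b).
  assert (Htail : 0 <= RInt (gauss_integrand s N) (INR M) (INR N)).
  { apply RInt_ge_0; auto; [apply ex_RInt_gauss_integrand, Hs|]. intros x Hx.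
    destruct (exp_neg_approx N x HN ltac:(pose proof (pos_INR M); lra)) as [H0 _].
    apply Rmult_le_pos; [apply ppow_ge0 | apply pow_le; auto]. }
  assert (HI := is_RInt_minus _ _ _ _ _ _
    (RInt_correct (gamma_integrand s) 0 (INR M) (ex_RInt_gamma_integrand _ _ _ Hs))
    (is_RInt_const (V := R_NormedModule) 0 (INR M) c)).
  change (scal ?a ?b) with (a * b) in HI. rewrite Rminus_0_r in HI.
  assert (Hhead := is_RInt_le _ _ 0 (INR M) _ _ (pos_INR M) HI
                     (RInt_correct _ _ _ (ex_RInt_gauss_integrand s N 0 (INR M) Hs))).
  unfold gamma_trunc. apply Rle_trans with (RInt (gauss_integrand s N) 0 (INR M)); [|lra].
  apply Hhead. intros x Hx. apply gamma_integrand_le_gauss_integrand; auto; lra.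
Qed.

Lemma gauss_integral_cv s L : 0 < s ->
  Un_cv (fun m => gamma_trunc s (INR m)) L -> (forall m, gamma_trunc s (INR m) <= L) ->
  Un_cv (fun n => gauss_integral s (S n)) L.
Proof.
  intros Hs HL HLb e He.
  destruct (HL (e / 2) ltac:(lra)) as [m1 Hm1].
  set (M := S m1).
  assert (HGM : L - e / 2 < gamma_trunc s (INR M)).
  { specialize (Hm1 M ltac:(unfold M; lia)). unfold R_dist in Hm1.
    apply Rabs_lt_between in Hm1. lra. }
  set (K := INR M * (Rpower (INR M) s * INR M ^ 2)).
  assert (HK : 0 <= K).
  { apply Rmult_le_pos; [apply pos_INR|].
    apply Rmult_le_pos; [left; apply Rpower_pos | apply pow_le, pos_INR]. }
  destruct (INR_archimed (e / 2) K ltac:(lra)) as [N1 HN1].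
  exists (max M N1). intros n Hn. unfold R_dist.
  assert (Hup : gauss_integral s (S n) <= L)
    by (eapply Rle_trans; [apply gauss_integral_le_trunc; auto; lia | apply HLb]).
  assert (Hlo := gauss_integral_ge_trunc s M (S n) ltac:(lia) ltac:(lia) Hs).
  assert (HSr : INR N1 < INR (S n)) by (apply lt_INR; lia).
  assert (Hpos : 0 < INR (S n)) by (apply lt_0_INR; lia).
  assert (Hc : INR M * (Rpower (INR M) s * INR M ^ 2 / INR (S n)) < e / 2).
  { replace (INR M * (Rpower (INR M) s * INR M ^ 2 / INR (S n))) with (K / INR (S n))
      by (unfold K; field; lra).
    apply Rmult_lt_reg_r with (INR (S n)); auto.
    unfold Rdiv. rewrite Rmult_assoc, Rinv_l by lra. nra. }
  apply Rabs_lt_between. lra.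
Qed.

(* [gbinom b N = b (b + 1) ... (b + N - 1) / N!], the coefficient of [z ^ N] in
   [(1 - z) ^ (- b)]; the [gbinom (- alpha) j] are the Grünwald-Letnikov weights. *)
Fixpoint gbinom (b : R) (N : nat) : R :=
  match N with O => 1 | S M => gbinom b M * (INR M + b) / INR (S M) end.

Lemma gbinom_S b M : gbinom b (S M) = gbinom b M * (INR M + b) / INR (S M).
Proof. reflexivity. Qed.

Lemma gbinom_succ_mul b j : gbinom b (S j) * INR (S j) = gbinom b j * (INR j + b).
Proof. rewrite gbinom_S. field. apply not_0_INR. lia. Qed.

Lemma gbinom_poch b N : gbinom b N * INR (fact N) = poch b N.
Proof.
  induction N; [simpl; lra|].
  rewrite fact_simpl, mult_INR, <- Rmult_assoc, gbinom_succ_mul.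
  simpl poch. rewrite <- IHN. ring.
Qed.

Lemma gbinom_1 M : gbinom 1 M = 1.
Proof.
  induction M; [reflexivity|]. rewrite gbinom_S. rewrite IHM, S_INR.
  field. pose proof (pos_INR M). lra.
Qed.

Lemma gbinom_ge0 b M : 0 <= b -> 0 <= gbinom b M.
Proof.
  intros Hb. induction M; [simpl; lra | rewrite gbinom_S].
  apply Rdiv_le_0_compat; [pose proof (pos_INR M); nra | apply lt_0_INR; lia].
Qed.

Lemma gbinom_pos b M : 0 < b -> 0 < gbinom b M.
Proof.
  intros Hb. induction M; [simpl; lra | rewrite gbinom_S].
  apply Rdiv_lt_0_compat; [pose proof (pos_INR M); nra | apply lt_0_INR; lia].
Qed.

Lemma gbinom_opp_le0 a j : 0 < a <= 1 -> (0 < j)%nat -> gbinom (- a) j <= 0.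
Proof.
  intros Ha Hj. induction j as [|j IHj]; [lia|]. rewrite gbinom_S.
  destruct j as [|j]; [simpl; lra|].
  assert (H := IHj ltac:(lia)). assert (1 <= INR (S j)) by (rewrite S_INR; pose proof (pos_INR j); lra).
  assert (gbinom (- a) (S j) * (INR (S j) + - a) <= 0) by nra.
  assert (0 < / INR (S (S j))) by (apply Rinv_0_lt_compat, lt_0_INR; lia).
  unfold Rdiv. nra.
Qed.

Lemma gbinom_le_pow s N : 0 <= s -> gbinom (s + 1) N <= (1 + s) ^ N.
Proof.
  intros Hs. induction N; [simpl; lra|]. rewrite gbinom_S, S_INR. simpl pow. pose proof (pos_INR N).
  assert (H1 : (INR N + (s + 1)) / (INR N + 1) <= 1 + s).
  { apply Rmult_le_reg_r with (INR N + 1); [lra|].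
    unfold Rdiv. rewrite Rmult_assoc, Rinv_l by lra. nra. }
  assert (0 <= gbinom (s + 1) N) by (apply gbinom_ge0; lra).
  assert (0 <= (INR N + (s + 1)) / (INR N + 1)) by (apply Rdiv_le_0_compat; lra).
  unfold Rdiv in *. rewrite Rmult_assoc, Rmult_comm. apply Rmult_le_compat; auto.
Qed.

Lemma gbinom_le b M N : 1 <= b -> (M <= N)%nat -> gbinom b M <= gbinom b N.
Proof.
  intros Hb HMN. induction HMN as [|N HMN IH]; [lra|]. rewrite gbinom_S.
  assert (0 <= gbinom b N) by (apply gbinom_ge0; lra). rewrite S_INR. pose proof (pos_INR N).
  apply Rle_trans with (gbinom b N); auto.
  apply Rmult_le_reg_r with (INR N + 1); [lra|].
  unfold Rdiv. rewrite !Rmult_assoc, Rinv_l by lra. nra.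
Qed.

Definition gbinom_conv (b c : R) (M : nat) : R :=
  fsum (S M) (fun j => gbinom b j * gbinom c (M - j)).

(* Split the factor [M + 1] as [j + (M + 1 - j)] and lower the index of one
   factor of each summand with [gbinom_succ_mul]. *)
Lemma gbinom_conv_succ b c M :
  INR (S M) * gbinom_conv b c (S M) = (INR M + b + c) * gbinom_conv b c M.
Proof.
  unfold gbinom_conv. rewrite <- (fsum_scal (S (S M))).
  rewrite (fsum_ext (S (S M)) _ (fun j => INR j * (gbinom b j * gbinom c (S M - j))
                                      + gbinom b j * (INR (S M - j) * gbinom c (S M - j))))
    by (intros i Hi; rewrite (minus_INR (S M) i) by lia; ring).
  rewrite fsum_add, fsum_shift. simpl (INR 0).
  rewrite (fsum_ext (S M) (fun i => INR (S i) * (gbinom b (S i) * gbinom c (S M - S i)))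
                          (fun i => (INR i + b) * gbinom b i * gbinom c (M - i))).
  2: { intros i Hi. replace (S M - S i)%nat with (M - i)%nat by lia.
       transitivity (gbinom b (S i) * INR (S i) * gbinom c (M - i)); [ring|].
       rewrite gbinom_succ_mul. ring. }
  change (fsum (S (S M)) ?f) with (fsum (S M) f + f (S M)). cbv beta.
  rewrite Nat.sub_diag. simpl (INR 0).
  rewrite (fsum_ext (S M) (fun j => gbinom b j * (INR (S M - j) * gbinom c (S M - j)))
                          (fun j => gbinom b j * ((INR (M - j) + c) * gbinom c (M - j)))).
  2: { intros i Hi. replace (S M - i)%nat with (S (M - i)) by lia.
       transitivity (gbinom b i * (gbinom c (S (M - i)) * INR (S (M - i)))); [ring|].
       rewrite gbinom_succ_mul. ring. }
  rewrite <- fsum_scal, Rmult_0_l, Rplus_0_l, Rmult_0_l, Rmult_0_r, Rplus_0_r, <- fsum_add.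
  apply fsum_ext. intros i Hi. rewrite minus_INR by lia. ring.
Qed.

Lemma gbinom_vandermonde b c M :
  fsum (S M) (fun j => gbinom b j * gbinom c (M - j)) = gbinom (b + c) M.
Proof.
  fold (gbinom_conv b c M). induction M; [unfold gbinom_conv; simpl; ring|].
  apply Rmult_eq_reg_l with (INR (S M)); [|apply not_0_INR; lia].
  rewrite gbinom_conv_succ, IHM, (Rmult_comm (INR (S M))), gbinom_succ_mul. ring.
Qed.

Lemma fsum_gbinom_opp a M : fsum (S M) (gbinom (- a)) = gbinom (1 - a) M.
Proof.
  replace (1 - a) with (- a + 1) by ring. rewrite <- gbinom_vandermonde.
  apply fsum_ext. intros. rewrite gbinom_1. ring.
Qed.

(** * Gauss's limit formula *)

Definition gauss_ratio (s : R) (N : nat) : R := gbinom (s + 1) N / Rpower (INR N) s.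

Lemma gauss_ratio_eq s N : (0 < N)%nat -> 0 < s ->
  gauss_ratio s N = INR N / ((s + INR N + 1) * gauss_integral s N).
Proof.
  intros HN Hs. unfold gauss_ratio. rewrite gauss_integral_eq by auto.
  assert (HNr : 0 < INR N) by (apply lt_0_INR; auto).
  assert (Hf := INR_fact_lt_0 N).
  assert (Hr := Rpower_pos (INR N) s).
  assert (Hg := gbinom_pos (s + 1) N ltac:(lra)).
  simpl poch. rewrite <- gbinom_poch.
  field. repeat split; lra.
Qed.

Lemma Un_cv_succ_div s : 0 <= s -> Un_cv (fun n => INR (S n) / (s + INR (S n) + 1)) 1.
Proof.
  intros Hs e He.
  destruct (Un_cv_inv_succ (e / (s + 1)) ltac:(apply Rdiv_lt_0_compat; lra)) as [N HN].
  exists N. intros n Hn. specialize (HN n Hn). unfold R_dist in *.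
  rewrite Rminus_0_r, Rabs_right in HN by (left; apply RinvN_pos).
  rewrite S_INR. pose proof (pos_INR n).
  replace ((INR n + 1) / (s + (INR n + 1) + 1) - 1) with (- ((s + 1) / (s + INR n + 2)))
    by (field; lra).
  rewrite Rabs_Ropp, Rabs_right by (left; apply Rdiv_lt_0_compat; lra).
  apply Rle_lt_trans with ((s + 1) * / (INR n + 1)).
  - unfold Rdiv. apply Rmult_le_compat_l; [lra | apply Rinv_le_contravar; lra].
  - apply Rmult_lt_reg_r with (/ (s + 1)); [apply Rinv_0_lt_compat; lra|].
    replace ((s + 1) * / (INR n + 1) * / (s + 1)) with (/ (INR n + 1)) by (field; lra).
    unfold Rdiv in HN. auto.
Qed.

Lemma gauss_ratio_cv s : 0 < s ->
  0 < Gamma (s + 1) /\ Un_cv (fun n => gauss_ratio s (S n)) (/ Gamma (s + 1)).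
Proof.
  intros Hs. destruct (gamma_trunc_cv s Hs) as [L [HL HLb]].
  rewrite (Gamma_succ_lim s L Hs HL).
  assert (HJ := gauss_integral_cv s L Hs HL HLb).
  assert (HLpos : 0 < L).
  { apply Rlt_le_trans with (gauss_integral s 1); [apply gauss_integral_pos; auto|].
    apply Rle_trans with (gamma_trunc s (INR 1)); [apply gauss_integral_le_trunc; auto | apply HLb]. }
  split; auto.
  apply Un_cv_ext with (fun n => INR (S n) / (s + INR (S n) + 1) * / gauss_integral s (S n)).
  { intros n. rewrite gauss_ratio_eq by (auto; lia).
    assert (0 < gauss_integral s (S n)) by (apply gauss_integral_pos; auto; lia).
    pose proof (pos_INR (S n)). field. lra. }
  replace (/ L) with (1 * / L) by ring. apply CV_mult; [apply Un_cv_succ_div; lra|].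
  apply is_lim_seq_Reals. apply is_lim_seq_Reals, is_lim_seq_inv in HJ; auto.
  intro Hc. injection Hc. lra.
Qed.

(* [gbinom (s + 1) (N + 1) / gbinom (s + 1) N = 1 + s / (N + 1)
    <= exp (s / (N + 1)) <= ((N + 1) / N) ^ s]. *)
Lemma gauss_ratio_succ_le s N : (0 < N)%nat -> 0 <= s -> gauss_ratio s (S N) <= gauss_ratio s N.
Proof.
  intros HN Hs. unfold gauss_ratio.
  assert (HNr : 0 < INR N) by (apply lt_0_INR; auto).
  rewrite gbinom_S, S_INR.
  assert (Hc := gbinom_pos (s + 1) N ltac:(lra)).
  assert (Hsplit : Rpower (INR N + 1) s = Rpower (INR N) s * Rpower ((INR N + 1) / INR N) s).
  { rewrite Rpower_mult_distr by (try apply Rdiv_lt_0_compat; lra). f_equal. field. lra. }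
  assert (Hk : 1 + s / (INR N + 1) <= Rpower ((INR N + 1) / INR N) s).
  { unfold Rpower. apply Rle_trans with (exp (s / (INR N + 1))); [apply exp_ineq1_le|].
    apply exp_le_compat.
    assert (/ (INR N + 1) <= ln ((INR N + 1) / INR N)).
    { replace ((INR N + 1) / INR N) with (/ (INR N / (INR N + 1))) by (field; lra).
      rewrite ln_Rinv by (apply Rdiv_lt_0_compat; lra).
      pose proof (ln_le_sub1 (INR N / (INR N + 1)) ltac:(apply Rdiv_lt_0_compat; lra)) as H.
      replace (INR N / (INR N + 1) - 1) with (- / (INR N + 1)) in H by (field; lra). lra. }
    unfold Rdiv. apply Rmult_le_compat_l; lra. }
  rewrite Hsplit.
  assert (Hr := Rpower_pos (INR N) s).
  assert (Hr2 := Rpower_pos ((INR N + 1) / INR N) s).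
  apply Rmult_le_reg_r with (Rpower (INR N) s * Rpower ((INR N + 1) / INR N) s); [nra|].
  replace (gbinom (s + 1) N * (INR N + (s + 1)) / (INR N + 1)
             / (Rpower (INR N) s * Rpower ((INR N + 1) / INR N) s)
             * (Rpower (INR N) s * Rpower ((INR N + 1) / INR N) s))
    with (gbinom (s + 1) N * (1 + s / (INR N + 1))) by (field; lra).
  replace (gbinom (s + 1) N / Rpower (INR N) s * (Rpower (INR N) s * Rpower ((INR N + 1) / INR N) s))
    with (gbinom (s + 1) N * Rpower ((INR N + 1) / INR N) s) by (field; lra).
  apply Rmult_le_compat_l; lra.
Qed.

Lemma gauss_ratio_le s N0 N : (0 < N0)%nat -> (N0 <= N)%nat -> 0 <= s ->
  gauss_ratio s N <= gauss_ratio s N0.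
Proof.
  intros H0 HN Hs. induction HN; [lra|].
  eapply Rle_trans; [apply gauss_ratio_succ_le|]; auto; lia.
Qed.

Lemma colsum_eq0 n A j : (j < n)%nat ->
  A j j = - fsum n (fun i => if Nat.eqb i j then 0 else A i j) ->
  fsum n (fun i => A i j) = 0.
Proof.
  intros Hj Hd.
  rewrite (fsum_ext n _ (fun i => (if Nat.eqb i j then 0 else A i j) + (if Nat.eqb i j then A j j else 0)))
    by (intros i _; destruct (Nat.eqb_spec i j); subst; ring).
  rewrite fsum_add, fsum_delta by auto. lra.
Qed.

Lemma colsum_matpow_succ n A k j :
  (forall l, (l < n)%nat -> fsum n (fun i => A i l) = 0) ->
  fsum n (fun i => matpow n A (S k) i j) = 0.
Proof.
  intros Hc. simpl. unfold matmul.
  rewrite fsum_swap. apply fsum_eq0. intros l Hl.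
  rewrite fsum_mulr, Hc by auto. ring.
Qed.

Lemma colsum_matid n j : (j < n)%nat -> fsum n (fun i => matid i j) = 1.
Proof. apply fsum_delta. Qed.

Lemma matpow_bound n A a k i j :
  (forall i l, (i < n)%nat -> (l < n)%nat -> Rabs (A i l) <= a) ->
  (i < n)%nat -> (j < n)%nat -> Rabs (matpow n A k i j) <= (INR n * a) ^ k.
Proof.
  intros Ha. revert i j. induction k; intros i j Hi Hj.
  - simpl. unfold matid. destruct (Nat.eqb i j); rewrite ?Rabs_R1, ?Rabs_R0; lra.
  - simpl matpow. unfold matmul. eapply Rle_trans; [apply fsum_abs|].
    eapply Rle_trans; [apply (fsum_le n _ (fun _ => a * (INR n * a) ^ k))|].
    + intros l Hl. rewrite Rabs_mult. apply Rmult_le_compat; try apply Rabs_pos; auto.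
    + rewrite fsum_const. simpl. lra.
Qed.

Lemma matrix_norm_bound n A : exists c, 0 <= c /\
  (forall i, (i < n)%nat -> fsum n (fun l => Rabs (A i l)) <= c) /\
  (forall k i j, (i < n)%nat -> (j < n)%nat -> Rabs (matpow n A k i j) <= c ^ k).
Proof.
  set (a := fsum n (fun i => fsum n (fun l => Rabs (A i l)))).
  assert (Hrow : forall i, (i < n)%nat -> 0 <= fsum n (fun l => Rabs (A i l)))
    by (intros; apply fsum_ge0; intros; apply Rabs_pos).
  assert (Hrow_le : forall i, (i < n)%nat -> fsum n (fun l => Rabs (A i l)) <= a)
    by (intros i Hi; apply (fsum_term_le n (fun i => fsum n (fun l => Rabs (A i l)))); auto).
  assert (Ha : 0 <= a) by (apply fsum_ge0; auto).
  exists (INR n * a). split; [apply Rmult_le_pos; [apply pos_INR | auto]|]. split.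
  - intros i Hi. assert (1 <= INR n) by (apply (le_INR 1); lia).
    specialize (Hrow_le i Hi). nra.
  - intros k i j Hi Hj. apply matpow_bound; auto. intros i' l Hi' Hl.
    eapply Rle_trans; [|apply (Hrow_le i' Hi')].
    apply (fsum_term_le n (fun l => Rabs (A i' l))); auto. intros; apply Rabs_pos.
Qed.

(* Inverse-positivity of [I - h A] for a Metzler matrix [A] and small [h]:
   look at a minimal entry of [v]. *)
Lemma metzler_max_principle n A h (v : nat -> R) :
  (forall i l, (i < n)%nat -> (l < n)%nat -> i <> l -> 0 <= A i l) ->
  0 <= h -> (forall i, (i < n)%nat -> h * fsum n (fun l => Rabs (A i l)) < 1) ->
  (forall i, (i < n)%nat -> 0 <= v i - h * fsum n (fun l => A i l * v l)) ->
  forall i, (i < n)%nat -> 0 <= v i.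
Proof.
  intros Hoff Hh Hrow Hv i Hi.
  destruct (exists_argmin n v ltac:(lia)) as [i0 [Hi0 Hmin]].
  apply Rle_trans with (v i0); [|auto].
  destruct (Rle_dec 0 (v i0)) as [|Hneg]; auto. exfalso.
  assert (H1 : fsum n (fun l => A i0 l * v i0) <= fsum n (fun l => A i0 l * v l)).
  { apply fsum_le. intros l Hl. destruct (Nat.eq_dec i0 l) as [->|Hne]; [lra|].
    apply Rmult_le_compat_l; auto. }
  rewrite fsum_mulr in H1.
  assert (H2 : fsum n (fun l => A i0 l) <= fsum n (fun l => Rabs (A i0 l)))
    by (apply fsum_le; intros; apply Rle_abs).
  specialize (Hrow i0 Hi0). specialize (Hv i0 Hi0).
  assert (h * fsum n (fun l => A i0 l) < 1) by nra.
  assert (h * (fsum n (fun l => A i0 l) * v i0) <= h * fsum n (fun l => A i0 l * v l))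
    by (apply Rmult_le_compat_l; auto).
  nra.
Qed.

(** * The Grünwald-Letnikov scheme *)

Lemma is_series_0 : is_series (fun _ : nat => 0) 0.
Proof.
  apply is_series_Reals. intros e He. exists O. intros m _.
  unfold R_dist. rewrite sum_cte. rewrite Rmult_0_l, Rminus_0_r, Rabs_R0. auto.
Qed.

Lemma is_series_fsum n (f : nat -> nat -> R) (s : nat -> R) :
  (forall l, (l < n)%nat -> is_series (f l) (s l)) ->
  is_series (fun k => fsum n (fun l => f l k)) (fsum n s).
Proof.
  induction n; intros H; simpl; [apply is_series_0|].
  apply (is_series_plus (V := R_NormedModule)); [apply IHn; auto | apply H; lia].
Qed.

Lemma is_series_tail (a : nat -> R) (l : R) : is_series a l -> is_series (fun k => a (S k)) (l - a O).
Proof.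
  intros H. apply is_series_incr_1.
  match goal with |- is_series _ ?p => replace p with l; [exact H|] end.
  change (l = l - a O + a O). ring.
Qed.

(* [gl_sol n A al h M i j] is entry [i] at time step [M] of the implicit
   Grünwald-Letnikov discretisation of [D^alpha y = A y], [y(0) = e_j], with step
   [tau] and [h = tau ^ alpha], expanded as a power series in [h A]. *)
Definition gl_term (n : nat) (A : mat) (al h : R) (M i j k : nat) : R :=
  h ^ k * matpow n A k i j * gbinom (al * INR k + 1) M.

Definition gl_sol (n : nat) (A : mat) (al h : R) (M i j : nat) : R :=
  Series (gl_term n A al h M i j).

Lemma gl_term_0 n A al h M i j : gl_term n A al h M i j O = matid i j.
Proof. unfold gl_term. simpl. rewrite Rmult_0_r, Rplus_0_l, gbinom_1. ring. Qed.

Lemma gl_term_succ n A al h M i j k :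
  h * fsum n (fun l => A i l * gl_term n A al h M l j k)
  = fsum (S M) (fun j' => gbinom (- al) j' * gl_term n A al h (M - j') i j (S k)).
Proof.
  unfold gl_term.
  rewrite (fsum_ext n _ (fun l => h ^ k * gbinom (al * INR k + 1) M * (A i l * matpow n A k l j)))
    by (intros; ring).
  rewrite (fsum_ext (S M) _ (fun j' => h ^ S k * matpow n A (S k) i j
                       * (gbinom (- al) j' * gbinom (al * INR (S k) + 1) (M - j'))))
    by (intros; ring).
  rewrite !fsum_scal, gbinom_vandermonde, S_INR.
  replace (- al + (al * (INR k + 1) + 1)) with (al * INR k + 1) by ring.
  simpl. unfold matmul. ring.
Qed.

Lemma gl_sol_recursion n A al h M i j :
  (i < n)%nat -> (j < n)%nat ->
  (forall M' i' j', (M' <= M)%nat -> (i' < n)%nat -> (j' < n)%nat ->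
     ex_series (gl_term n A al h M' i' j')) ->
  gl_sol n A al h M i j - h * fsum n (fun l => A i l * gl_sol n A al h M l j)
  = matid i j * gbinom (1 - al) M
    - fsum M (fun j' => gbinom (- al) (S j') * gl_sol n A al h (M - S j') i j).
Proof.
  intros Hi Hj Hex.
  assert (H1 : is_series (fun k => h * fsum n (fun l => A i l * gl_term n A al h M l j k))
                         (h * fsum n (fun l => A i l * gl_sol n A al h M l j))).
  { apply (is_series_scal (V := R_NormedModule)), is_series_fsum. intros l Hl.
    apply (is_series_scal (V := R_NormedModule)), Series_correct, Hex; auto. }
  assert (H2 : is_series (fun k => fsum (S M) (fun j' => gbinom (- al) j' * gl_term n A al h (M - j') i j (S k)))
                         (fsum (S M) (fun j' => gbinom (- al) j' * (gl_sol n A al h (M - j') i j - matid i j)))).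
  { apply is_series_fsum. intros l Hl. apply (is_series_scal (V := R_NormedModule)).
    rewrite <- (gl_term_0 n A al h (M - l) i j).
    apply is_series_tail, Series_correct, Hex; auto; lia. }
  apply (is_series_ext _ _ _ (gl_term_succ n A al h M i j)) in H1.
  assert (E := is_series_unique _ _ H1). rewrite (is_series_unique _ _ H2) in E.
  rewrite <- E.
  rewrite (fsum_ext (S M) _ (fun j' => gbinom (- al) j' * gl_sol n A al h (M - j') i j
                                       + - matid i j * gbinom (- al) j')) by (intros; ring).
  rewrite fsum_add, fsum_scal, fsum_gbinom_opp, fsum_shift.
  simpl (gbinom (- al) 0). rewrite Nat.sub_0_r. ring.
Qed.

Lemma gl_sol_ge0 n A al h N :
  (forall i l, (i < n)%nat -> (l < n)%nat -> i <> l -> 0 <= A i l) ->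
  0 < al <= 1 -> 0 <= h -> (forall i, (i < n)%nat -> h * fsum n (fun l => Rabs (A i l)) < 1) ->
  (forall M i j, (M <= N)%nat -> (i < n)%nat -> (j < n)%nat -> ex_series (gl_term n A al h M i j)) ->
  forall M i j, (M <= N)%nat -> (i < n)%nat -> (j < n)%nat -> 0 <= gl_sol n A al h M i j.
Proof.
  intros Hoff Hal Hh Hrow Hex M.
  induction M as [M IHM] using (well_founded_induction Wf_nat.lt_wf). intros i j HM Hi Hj.
  apply (metzler_max_principle n A h (fun i => gl_sol n A al h M i j)); auto.
  intros i' Hi'. rewrite gl_sol_recursion by (auto; intros; apply Hex; lia).
  assert (0 <= matid i' j * gbinom (1 - al) M).
  { apply Rmult_le_pos; [unfold matid; destruct (Nat.eqb i' j); lra | apply gbinom_ge0; lra]. }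
  assert (fsum M (fun j' => gbinom (- al) (S j') * gl_sol n A al h (M - S j') i' j) <= 0).
  { rewrite <- (Rmult_0_r (INR M)), <- fsum_const. apply fsum_le. intros j' Hj'.
    assert (gbinom (- al) (S j') <= 0) by (apply gbinom_opp_le0; auto; lia).
    assert (0 <= gl_sol n A al h (M - S j') i' j) by (apply IHM; auto; lia).
    nra. }
  lra.
Qed.

(** * Tannery's theorem *)

Lemma Un_cv_ge0 (u : nat -> R) l N0 : Un_cv u l -> (forall N, (N0 <= N)%nat -> 0 <= u N) -> 0 <= l.
Proof.
  intros Hu Hb. apply is_lim_seq_Reals in Hu.
  apply (is_lim_seq_le_loc (fun _ => 0) u 0 l); [exists N0; auto | apply is_lim_seq_const | auto].
Qed.

Lemma Un_cv_abs_le (u : nat -> R) l d N0 :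
  Un_cv u l -> (forall N, (N0 <= N)%nat -> Rabs (u N) <= d) -> Rabs l <= d.
Proof.
  intros Hu Hb. apply is_lim_seq_Reals, is_lim_seq_abs in Hu.
  apply (is_lim_seq_le_loc (fun N => Rabs (u N)) (fun _ => d) (Rabs l) d);
    [exists N0; auto | auto | apply is_lim_seq_const].
Qed.

Lemma ex_series_dominated (a D : nat -> R) : (forall k, Rabs (a k) <= D k) -> ex_series D -> ex_series a.
Proof. apply (ex_series_le (V := R_CompleteNormedModule)). Qed.

Lemma Series_tail_abs_le (a D : nat -> R) K : (forall k, Rabs (a k) <= D k) -> ex_series D ->
  Rabs (Series (fun k => a (K + k)%nat)) <= Series (fun k => D (K + k)%nat).
Proof.
  intros H HD. assert (HDt : ex_series (fun k => D (K + k)%nat)) by (apply ex_series_incr_n; auto).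
  eapply Rle_trans; [apply Series_Rabs|].
  - apply ex_series_dominated with (fun k => D (K + k)%nat); auto.
    intros; rewrite Rabs_Rabsolu; auto.
  - apply Series_le; auto. intros; split; [apply Rabs_pos | auto].
Qed.

Lemma Series_tail_cv (D : nat -> R) : ex_series D -> Un_cv (fun K => Series (fun k => D (S K + k)%nat)) 0.
Proof.
  intros HD. assert (Hs := Series_correct D HD). apply is_series_Reals in Hs.
  apply Un_cv_ext with (fun K => Series D - sum_f_R0 D K).
  { intros K. rewrite (Series_incr_n D (S K)) by (auto; lia). simpl. ring. }
  intros e He. destruct (Hs e He) as [N HN]. exists N. intros n Hn. specialize (HN n Hn).
  unfold R_dist in *. rewrite Rminus_0_r, <- Rabs_Ropp, Ropp_minus_distr. auto.
Qed.

Lemma sum_f_R0_cv (T : nat -> nat -> R) (Tl : nat -> R) m :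
  (forall k, Un_cv (fun N => T N k) (Tl k)) -> Un_cv (fun N => sum_f_R0 (fun k => T N k - Tl k) m) 0.
Proof.
  intros H. induction m; simpl.
  - replace 0 with (Tl O - Tl O) by ring. apply CV_minus; [apply H | apply Un_cv_const].
  - replace 0 with (0 + (Tl (S m) - Tl (S m))) by ring.
    apply CV_plus; auto. apply CV_minus; [apply H | apply Un_cv_const].
Qed.

Lemma tannery (T : nat -> nat -> R) (Tl D : nat -> R) N0 :
  (forall k, Un_cv (fun N => T N k) (Tl k)) ->
  (forall N k, (N0 <= N)%nat -> Rabs (T N k) <= D k) ->
  ex_series D ->
  ex_series Tl /\ Un_cv (fun N => Series (T N)) (Series Tl).
Proof.
  intros Hcv Hb HD.
  assert (HTl : forall k, Rabs (Tl k) <= D k) by (intros k; apply (Un_cv_abs_le _ _ _ N0 (Hcv k)); auto).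
  assert (HexTl : ex_series Tl) by (apply ex_series_dominated with D; auto).
  split; auto. intros e He.
  destruct (Series_tail_cv D HD (e / 3) ltac:(lra)) as [K HK].
  specialize (HK K ltac:(lia)). unfold R_dist in HK. rewrite Rminus_0_r in HK.
  assert (Ht0 : 0 <= Series (fun k => D (S K + k)%nat)).
  { apply Rle_trans with (Rabs (Series (fun k => Tl (S K + k)%nat)));
      [apply Rabs_pos | apply Series_tail_abs_le; auto]. }
  rewrite Rabs_right in HK by lra.
  destruct (sum_f_R0_cv T Tl K Hcv (e / 3) ltac:(lra)) as [N1 HN1].
  exists (max N0 N1). intros N HN. unfold R_dist.
  specialize (HN1 N ltac:(lia)). unfold R_dist in HN1. rewrite Rminus_0_r in HN1.
  assert (HbN : forall k, Rabs (T N k) <= D k) by (intros; apply Hb; lia).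
  assert (HexT : ex_series (T N)) by (apply ex_series_dominated with D; auto).
  rewrite (Series_incr_n (T N) (S K)), (Series_incr_n Tl (S K)) by (auto; lia). simpl pred.
  assert (E : sum_f_R0 (T N) K - sum_f_R0 Tl K = sum_f_R0 (fun k => T N k - Tl k) K).
  { clear. induction K; simpl; auto. rewrite <- IHK. ring. }
  assert (H1 := Series_tail_abs_le (T N) D (S K) HbN HD).
  assert (H2 := Series_tail_abs_le Tl D (S K) HTl HD).
  replace (sum_f_R0 (T N) K + Series (fun k => T N (S K + k)%nat)
           - (sum_f_R0 Tl K + Series (fun k => Tl (S K + k)%nat)))
    with (sum_f_R0 (fun k => T N k - Tl k) K
          + (Series (fun k => T N (S K + k)%nat) - Series (fun k => Tl (S K + k)%nat)))
    by (rewrite <- E; ring).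
  eapply Rle_lt_trans; [apply Rabs_triang|].
  eapply Rle_lt_trans; [apply Rplus_le_compat_l, Rabs_triang|].
  rewrite Rabs_Ropp. lra.
Qed.

(** * Convergence of the scheme to the Mittag-Leffler series *)

Lemma rpow_0_r t : rpow t 0 = 1.
Proof.
  unfold rpow. destruct (Req_EM_T t 0); [destruct (Req_EM_T 0 0); lra|].
  unfold Rpower. rewrite Rmult_0_l. apply exp_0.
Qed.

Lemma ML_term_0 n A al t i j : ML_term n A al t i j O = matid i j.
Proof.
  unfold ML_term. simpl INR. rewrite Rmult_0_r, rpow_0_r, Rplus_0_l, Gamma_1. simpl. field.
Qed.

Section PositiveTime.

Variables (n : nat) (A : mat) (al t c : R).
Hypotheses (Hal0 : 0 < al) (Hal1 : al <= 1) (Ht : 0 < t) (Hc : 0 <= c).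
Hypothesis Hrow : forall i, (i < n)%nat -> fsum n (fun l => Rabs (A i l)) <= c.
Hypothesis Hpow : forall k i j, (i < n)%nat -> (j < n)%nat -> Rabs (matpow n A k i j) <= c ^ k.

(* [h = tau ^ alpha] for the time step [tau = t / N]. *)
Let step (N : nat) : R := Rpower (t / INR N) al.

Let dom (N0 k : nat) : R := Rpower t (al * INR k) * c ^ k * gauss_ratio (al * INR k) N0.

Lemma step_pow N k : (0 < N)%nat -> step N ^ k = Rpower t (al * INR k) / Rpower (INR N) (al * INR k).
Proof.
  intros HN. assert (0 < INR N) by (apply lt_0_INR; auto).
  unfold step. rewrite Rpower_pow_INR, Rpower_div; auto. apply Rdiv_lt_0_compat; auto.
Qed.

Lemma step_mul_lt1 N : (0 < N)%nat -> 4 * Rpower t al * c + 1 <= Rpower (INR N) al ->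
  step N * c < 1.
Proof.
  intros HN Hlarge. assert (HNr : 0 < INR N) by (apply lt_0_INR; auto).
  assert (HP := Rpower_pos (INR N) al). assert (Hta := Rpower_pos t al).
  unfold step. rewrite Rpower_div by auto.
  replace (Rpower t al / Rpower (INR N) al * c) with (Rpower t al * c / Rpower (INR N) al)
    by (field; lra).
  apply (Rmult_lt_reg_r (Rpower (INR N) al)); auto.
  unfold Rdiv. rewrite Rmult_assoc, Rinv_l, Rmult_1_r, Rmult_1_l by lra. lra.
Qed.

Lemma gl_term_step N i j k : (0 < N)%nat ->
  gl_term n A al (step N) N i j k = Rpower t (al * INR k) * matpow n A k i j * gauss_ratio (al * INR k) N.
Proof.
  intros HN. unfold gl_term, gauss_ratio. rewrite step_pow by auto.
  assert (0 < Rpower (INR N) (al * INR k)) by apply Rpower_pos.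
  field. lra.
Qed.

Lemma ex_series_dom N0 : (0 < N0)%nat -> 4 * Rpower t al * c + 1 <= Rpower (INR N0) al ->
  ex_series (dom N0).
Proof.
  intros HN0 Hlarge. set (P := Rpower (INR N0) al) in *. set (q := Rpower t al * c / P).
  assert (HP : 0 < P) by apply Rpower_pos. assert (Hta := Rpower_pos t al).
  assert (Hq : 0 <= q <= / 4).
  { unfold q. split; [apply Rdiv_le_0_compat; nra|].
    apply Rmult_le_reg_r with P; auto. unfold Rdiv. rewrite Rmult_assoc, Rinv_l by lra. lra. }
  apply ex_series_dominated with (fun k => (2 * INR N0) ^ N0 * 2 * (/ 2) ^ k).
  - intros k. assert (Hk := pos_INR k).
    assert (Hg : 0 <= gbinom (al * INR k + 1) N0) by (apply gbinom_ge0; nra).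
    unfold dom, gauss_ratio.
    rewrite <- !Rpower_pow_INR by (auto; apply lt_0_INR; auto). fold P.
    replace (Rpower t al ^ k * c ^ k * (gbinom (al * INR k + 1) N0 / P ^ k))
      with (q ^ k * gbinom (al * INR k + 1) N0)
      by (unfold q, Rdiv; rewrite !Rpow_mult_distr, pow_inv; field; apply pow_nonzero; lra).
    rewrite Rabs_right by (apply Rle_ge, Rmult_le_pos; auto; apply pow_le; lra).
    eapply Rle_trans; [|apply (pow_mul_poly_le_geom q N0 k Hq HN0)].
    apply Rmult_le_compat_l; [apply pow_le; lra|].
    eapply Rle_trans; [apply gbinom_le_pow; nra|].
    apply pow_incr. nra.
  - apply (ex_series_scal_l (V := R_NormedModule)), ex_series_geom.
    rewrite Rabs_right; lra.
Qed.

Lemma gl_term_dominated N0 N M i j k : (0 < N0)%nat -> (N0 <= N)%nat -> (M <= N)%nat ->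
  (i < n)%nat -> (j < n)%nat -> Rabs (gl_term n A al (step N) M i j k) <= dom N0 k.
Proof.
  intros HN0 HN HM Hi Hj. assert (Hk := pos_INR k).
  assert (Hgn : 0 <= gbinom (al * INR k + 1) M) by (apply gbinom_ge0; nra).
  apply Rle_trans with (Rpower t (al * INR k) * c ^ k * gauss_ratio (al * INR k) N).
  - unfold gl_term, gauss_ratio. rewrite step_pow by lia.
    assert (Ht' := Rpower_pos t (al * INR k)). assert (HN' := Rpower_pos (INR N) (al * INR k)).
    rewrite !Rabs_mult, (Rabs_right (gbinom _ M)), Rabs_right by (apply Rle_ge; auto; apply Rdiv_le_0_compat; lra).
    replace (Rpower t (al * INR k) * c ^ k * (gbinom (al * INR k + 1) N / Rpower (INR N) (al * INR k)))
      with (Rpower t (al * INR k) / Rpower (INR N) (al * INR k) * c ^ k * gbinom (al * INR k + 1) N)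
      by (field; lra).
    apply Rmult_le_compat; [apply Rmult_le_pos; [apply Rdiv_le_0_compat; lra | apply Rabs_pos] | auto
                           | apply Rmult_le_compat_l; [apply Rdiv_le_0_compat; lra | auto]
                           | apply gbinom_le; [nra | auto]].
  - apply Rmult_le_compat_l; [apply Rmult_le_pos; [left; apply Rpower_pos | apply pow_le; auto]|].
    apply gauss_ratio_le; auto. nra.
Qed.

Lemma gl_term_cv i j k : Un_cv (fun N => gl_term n A al (step N) N i j k) (ML_term n A al t i j k).
Proof.
  destruct k as [|k].
  - rewrite ML_term_0. eapply Un_cv_ext; [|apply Un_cv_const]. intros N. symmetry. apply gl_term_0.
  - set (s := al * INR (S k)).
    assert (Hs : 0 < s) by (apply Rmult_lt_0_compat; auto; apply lt_0_INR; lia).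
    destruct (gauss_ratio_cv s Hs) as [HG Hlim].
    apply (CV_shift _ 1).
    apply Un_cv_ext with (fun N => (Rpower t s * matpow n A (S k) i j) * gauss_ratio s (S N)).
    { intros N. rewrite Nat.add_1_r, gl_term_step by lia. reflexivity. }
    unfold ML_term. fold s. unfold rpow. destruct (Req_EM_T t 0); [lra|].
    unfold Rdiv. apply CV_mult; auto. apply Un_cv_const.
Qed.

Lemma ML_series_ge0 i j : (forall i l, (i < n)%nat -> (l < n)%nat -> i <> l -> 0 <= A i l) ->
  (i < n)%nat -> (j < n)%nat ->
  ex_series (ML_term n A al t i j) /\ 0 <= Series (ML_term n A al t i j).
Proof.
  intros Hoff Hi Hj.
  destruct (Rpower_INR_large (4 * Rpower t al * c + 1) al Hal0) as [N0 [HN0 Hlarge]].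
  destruct (tannery (fun N => gl_term n A al (step N) N i j) (ML_term n A al t i j) (dom N0) N0)
    as [Hex Hlim].
  - apply gl_term_cv.
  - intros N k HN. apply gl_term_dominated; auto.
  - apply ex_series_dom; auto.
  - split; auto. apply (Un_cv_ge0 _ _ N0 Hlim). intros N HN.
    assert (Hstep := step_mul_lt1 N ltac:(lia) (Hlarge N HN)).
    apply (gl_sol_ge0 n A al (step N) N); auto.
    + left; apply Rpower_pos.
    + intros i' Hi'. eapply Rle_lt_trans; [|exact Hstep].
      apply Rmult_le_compat_l; [left; apply Rpower_pos | auto].
    + intros M i' j' HM Hi' Hj'. apply ex_series_dominated with (dom N0); [|apply ex_series_dom; auto].
      intros; apply gl_term_dominated; auto.
Qed.

End PositiveTime.

Lemma series_sum_eq (a : nat -> R) l : is_series a l -> series_sum a = l.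
Proof.
  intros H. apply is_series_Reals in H. unfold series_sum.
  destruct (excluded_middle_informative _) as [H1|H1].
  - destruct (constructive_indefinite_description _ H1) as [l' Hl']. simpl.
    eapply uniqueness_sum; eauto.
  - exfalso; apply H1; eauto.
Qed.

Lemma is_series_head (a : nat -> R) : (forall k, a (S k) = 0) -> is_series a (a O).
Proof.
  intros H. apply is_series_decr_1.
  match goal with |- is_series _ ?p => replace p with 0 by (change (0 = a O + - a O); ring) end.
  eapply is_series_ext; [|apply is_series_0]. intros k. simpl. rewrite H. auto.
Qed.

Lemma ML_term_t0 n A al i j : 0 < al -> is_series (ML_term n A al 0 i j) (matid i j).
Proof.
  intros Hal. rewrite <- (ML_term_0 n A al 0 i j). apply is_series_head.
  intros k. unfold ML_term, rpow. destruct (Req_EM_T 0 0); [|lra].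
  destruct (Req_EM_T (al * INR (S k)) 0) as [e0|].
  - exfalso. assert (0 < al * INR (S k)) by (apply Rmult_lt_0_compat; auto; apply lt_0_INR; lia). lra.
  - unfold Rdiv. ring.
Qed.

Lemma ML_series_ex_ge0 n A al t i j :
  (forall i l, (i < n)%nat -> (l < n)%nat -> i <> l -> 0 <= A i l) ->
  0 < al -> al <= 1 -> 0 <= t -> (i < n)%nat -> (j < n)%nat ->
  ex_series (ML_term n A al t i j) /\ 0 <= Series (ML_term n A al t i j).
Proof.
  intros Hoff Hal0 Hal1 Ht Hi Hj. destruct Ht as [Ht | <-].
  - destruct (matrix_norm_bound n A) as [c [Hc [Hrow Hpow]]].
    apply (ML_series_ge0 n A al t c); auto.
  - split; [eexists; apply ML_term_t0; auto|].
    rewrite (is_series_unique _ _ (ML_term_t0 n A al i j Hal0)).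
    unfold matid. destruct (Nat.eqb i j); lra.
Qed.

Lemma is_series_ML_colsum n A al t j :
  (forall l, (l < n)%nat -> fsum n (fun i => A i l) = 0) -> (j < n)%nat ->
  is_series (fun k => fsum n (fun i => ML_term n A al t i j k)) 1.
Proof.
  intros Hcol Hj.
  rewrite <- (colsum_matid n j Hj), <- (fsum_ext n _ _ (fun i _ => ML_term_0 n A al t i j)).
  apply is_series_head. intros k. unfold ML_term.
  rewrite (fsum_ext n _ (fun i => rpow t (al * INR (S k)) / Gamma (al * INR (S k) + 1)
                                  * matpow n A (S k) i j)) by (intros; unfold Rdiv; ring).
  rewrite fsum_scal, colsum_matpow_succ by auto. ring.
Qed.

Theorem mainTheorem6 (n : nat) (A : mat) (alpha t : R)
  (hoff : forall i j, (i < n)%nat -> (j < n)%nat -> i <> j -> 0 <= A i j)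
  (hdiag : forall j, (j < n)%nat ->
     A j j = - fsum n (fun i => if Nat.eqb i j then 0 else A i j))
  (halpha0 : 0 < alpha) (halpha1 : alpha <= 1) (ht : 0 <= t) :
  (forall i j, (i < n)%nat -> (j < n)%nat ->
     exists l, infinite_sum (ML_term n A alpha t i j) l) /\
  (forall i j, (i < n)%nat -> (j < n)%nat -> 0 <= ML_matrix n A alpha t i j) /\
  (forall j, (j < n)%nat -> fsum n (fun i => ML_matrix n A alpha t i j) = 1).
Proof.
  pose proof (ML_series_ex_ge0 n A alpha t) as HML.
  assert (Hsum : forall i j, (i < n)%nat -> (j < n)%nat ->
                   ML_matrix n A alpha t i j = Series (ML_term n A alpha t i j))
    by (intros i j Hi Hj; apply series_sum_eq, Series_correct, HML; auto).
  split; [|split].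
  - intros i j Hi Hj. destruct (HML i j) as [[l Hl] _]; auto.
    exists l. apply is_series_Reals, Hl.
  - intros i j Hi Hj. rewrite Hsum by auto. apply HML; auto.
  - intros j Hj. rewrite (fsum_ext n _ _ (fun i Hi => Hsum i j Hi Hj)).
    assert (Hcol : forall l, (l < n)%nat -> fsum n (fun i => A i l) = 0)
      by (intros l Hl; apply colsum_eq0; auto).
    rewrite <- (is_series_unique _ _ (is_series_ML_colsum n A alpha t j Hcol Hj)).
    symmetry. apply is_series_unique, is_series_fsum. intros i Hi. apply Series_correct, HML; auto.
Qed.
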